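(* Let $f:\mathbb{N}\to\mathbb{N}$ be a unary extended polynomial. Then there exists $m\in\mathbb{N}$ such that for all $n_1,n_2\geq m$, if $n_1\geq n_2$ then $f(n_1)\geq f(n_2)$.
   Context: The class of extended polynomials is the smallest class of functions $\mathbb{N}^k\to\mathbb{N}$ (of all arities $k$) that contains the constant functions $0$ and $1$, all projections, addition, multiplication, and the function $\mathrm{ifzero}(n,m,p)=m$ if $n=0$ and $=p$ otherwise, and that is closed under composition. *)

From Stdlib Require Import Arith Fin.

Definition kfun (k : nat) : Type := (Fin.t k -> nat) -> nat.

Definition ifzero (n m p : nat) : nat := match n with 0 => m | _ => p end.

Definition F0_2 : Fin.t 2 := Fin.F1.
Definition F1_2 : Fin.t 2 := Fin.FS Fin.F1.
Definition F0_3 : Fin.t 3 := Fin.F1.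
Definition F1_3 : Fin.t 3 := Fin.FS Fin.F1.
Definition F2_3 : Fin.t 3 := Fin.FS (Fin.FS Fin.F1).

Inductive ext_poly : forall k : nat, kfun k -> Prop :=
| ep_zero (k : nat) : ext_poly k (fun _ => 0)
| ep_one (k : nat) : ext_poly k (fun _ => 1)
| ep_proj (k : nat) (i : Fin.t k) : ext_poly k (fun x => x i)
| ep_add : ext_poly 2 (fun x => x F0_2 + x F1_2)
| ep_mul : ext_poly 2 (fun x => x F0_2 * x F1_2)
| ep_ifzero : ext_poly 3 (fun x => ifzero (x F0_3) (x F1_3) (x F2_3))
| ep_comp (k j : nat) (f : kfun k) (g : Fin.t k -> kfun j) :
    ext_poly k f -> (forall i, ext_poly j (g i)) ->
    ext_poly j (fun x => f (fun i => g i x)).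

Definition unary_ext_poly (f : nat -> nat) : Prop :=
  ext_poly 1 (fun x => f (x Fin.F1)).

(** Evaluated on functions of [n] that eventually coincide with polynomials
    with natural coefficients, every extended polynomial again eventually
    coincides with such a polynomial: the test of [ifzero] is then a
    polynomial, which either vanishes at every [n >= 1] or at none of them,
    so from some point on [ifzero] always selects the same branch.
    Polynomials with natural coefficients are monotone. *)

From Stdlib Require Import Arith Lia Fin.

Inductive nat_poly : (nat -> nat) -> Prop :=
| nat_poly_const (c : nat) : nat_poly (fun _ => c)
| nat_poly_id : nat_poly (fun n => n)
| nat_poly_add (p q : nat -> nat) :
    nat_poly p -> nat_poly q -> nat_poly (fun n => p n + q n)
| nat_poly_mul (p q : nat -> nat) :
    nat_poly p -> nat_poly q -> nat_poly (fun n => p n * q n).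

Lemma nat_poly_mono (p : nat -> nat) :
  nat_poly p -> forall n m, n <= m -> p n <= p m.
Proof.
  induction 1 as [c| |p q _ IHp _ IHq|p q _ IHp _ IHq]; intros n m Hnm.
  - lia.
  - exact Hnm.
  - specialize (IHp n m Hnm); specialize (IHq n m Hnm); lia.
  - apply Nat.mul_le_mono; auto.
Qed.

Lemma nat_poly_zero_or_pos (p : nat -> nat) : nat_poly p ->
  (forall n, 1 <= n -> p n = 0) \/ (forall n, 1 <= n -> 0 < p n).
Proof.
  induction 1 as [c| |p q _ IHp _ IHq|p q _ IHp _ IHq].
  - destruct c; [left | right]; intros; lia.
  - right; intros; lia.
  - destruct IHp as [Hp|Hp], IHq as [Hq|Hq];
      [left | right | right | right]; intros n Hn;
      specialize (Hp n Hn); specialize (Hq n Hn); lia.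
  - destruct IHp as [Hp|Hp], IHq as [Hq|Hq];
      [left | left | left | right]; intros n Hn;
      specialize (Hp n Hn); specialize (Hq n Hn); nia.
Qed.

Definition eventually (P : nat -> Prop) : Prop :=
  exists N, forall n, N <= n -> P n.

Lemma eventually_and (P Q : nat -> Prop) :
  eventually P -> eventually Q -> eventually (fun n => P n /\ Q n).
Proof.
  intros [N HP] [M HQ]; exists (N + M); intros n Hn; split.
  - apply HP; lia.
  - apply HQ; lia.
Qed.

Lemma eventually_mono (P Q : nat -> Prop) :
  (forall n, P n -> Q n) -> eventually P -> eventually Q.
Proof. intros HPQ [N HP]; exists N; auto. Qed.

Definition eventually_poly (h : nat -> nat) : Prop :=
  exists p, nat_poly p /\ eventually (fun n => h n = p n).

Lemma nat_poly_eventually_poly (p : nat -> nat) :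
  nat_poly p -> eventually_poly p.
Proof. intros Hp; exists p; split; [exact Hp | exists 0; auto]. Qed.

Lemma eventually_poly_add (h g : nat -> nat) :
  eventually_poly h -> eventually_poly g ->
  eventually_poly (fun n => h n + g n).
Proof.
  intros [p [Hp Ep]] [q [Hq Eq]].
  exists (fun n => p n + q n); split; [now constructor |].
  apply (eventually_mono _ _ (fun n H => f_equal2 Nat.add (proj1 H) (proj2 H))).
  now apply eventually_and.
Qed.

Lemma eventually_poly_mul (h g : nat -> nat) :
  eventually_poly h -> eventually_poly g ->
  eventually_poly (fun n => h n * g n).
Proof.
  intros [p [Hp Ep]] [q [Hq Eq]].
  exists (fun n => p n * q n); split; [now constructor |].
  apply (eventually_mono _ _ (fun n H => f_equal2 Nat.mul (proj1 H) (proj2 H))).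
  now apply eventually_and.
Qed.

Lemma eventually_poly_ifzero (h g k : nat -> nat) :
  eventually_poly h -> eventually_poly g -> eventually_poly k ->
  eventually_poly (fun n => ifzero (h n) (g n) (k n)).
Proof.
  intros [p [Hp Ep]] Hg Hk.
  assert (Ep1 : eventually (fun n => h n = p n /\ 1 <= n)).
  { apply eventually_and; [exact Ep | exists 1; auto]. }
  destruct (nat_poly_zero_or_pos p Hp) as [Hzero|Hpos].
  - destruct Hg as [q [Hq Eq]]; exists q; split; [exact Hq |].
    apply (eventually_mono (fun n => (h n = p n /\ 1 <= n) /\ g n = q n));
      [| now apply eventually_and].
    intros n [[Hhp Hn] Hgq]; rewrite Hhp, (Hzero n Hn); exact Hgq.
  - destruct Hk as [r [Hr Er]]; exists r; split; [exact Hr |].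
    apply (eventually_mono (fun n => (h n = p n /\ 1 <= n) /\ k n = r n));
      [| now apply eventually_and].
    intros n [[Hhp Hn] Hkr]; rewrite Hhp.
    specialize (Hpos n Hn); destruct (p n); [lia | exact Hkr].
Qed.

Lemma ext_poly_eventually_poly (k : nat) (f : kfun k) : ext_poly k f ->
  forall u : Fin.t k -> nat -> nat, (forall i, eventually_poly (u i)) ->
  eventually_poly (fun n => f (fun i => u i n)).
Proof.
  induction 1 as [k|k|k i| | | |k j f g _ IHf _ IHg]; intros u Hu.
  - apply nat_poly_eventually_poly; constructor.
  - apply nat_poly_eventually_poly; constructor.
  - apply Hu.
  - now apply eventually_poly_add.
  - now apply eventually_poly_mul.
  - now apply eventually_poly_ifzero.
  - apply IHf; intros i; now apply IHg.
Qed.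

Theorem proposition1 (f : nat -> nat) (hf : unary_ext_poly f) :
  exists m : nat, forall n1 n2 : nat,
    m <= n1 -> m <= n2 -> n2 <= n1 -> f n2 <= f n1.
Proof.
  destruct (ext_poly_eventually_poly 1 _ hf (fun _ n => n)) as [p [Hp [m Hm]]].
  { intros _; apply nat_poly_eventually_poly; constructor. }
  exists m; intros n1 n2 Hn1 Hn2 Hle.
  rewrite (Hm n1 Hn1), (Hm n2 Hn2).
  now apply nat_poly_mono.
Qed.
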